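(* (a) A proposition $p$ of QHC is semi-stable if and only if it is stable. (b) A problem $\alpha$ of QHC is semi-decidable if and only if the proposition $?\alpha$ is semi-decidable.
   Context: QHC is a two-sorted first-order calculus. Its only terms are individual variables. Every formula is either a problem (denoted by Greek letters $\alpha,\beta,\gamma,\dots$) or a proposition (denoted by Latin letters $p,q,\dots$). Atomic formulas are proposition variables $p(t_1,\dots,t_n)$ (of proposition type), problem variables $\pi(t_1,\dots,t_n)$ (of problem type), and the constants $0$ (a proposition, classical falsity) and $\bot$ (a problem, intuitionistic absurdity). Propositions are closed under the classical connectives $\land,\lor,\to$ and quantifiers $\exists,\forall$; problems are closed under the intuitionistic connectives $\land,\lor,\to$ and quantifiers $\exists,\forall$ (the same symbols are used, distinguished by the type of the arguments). $\neg p$ abbreviates $p\to 0$, $\neg\alpha$ abbreviates $\alpha\to\bot$, and $\leftrightarrow$ is defined as usual. There are two type-conversion operators: if $p$ is a proposition then $!p$ is a problem, and if $\alpha$ is a problem then $?\alpha$ is a proposition. Deductive system of QHC: all axioms and rules of classical predicate logic applied to all propositions; all postulates and rules of intuitionistic predicate logic applied to all problems; the rules $p\,/\,!p$ and $\alpha\,/\,?\alpha$; and the schemas $?!p\to p$; $\alpha\to\, !?\alpha$; $!(p\to q)\to(!p\to !q)$; $?(\alpha\to\beta)\to(?\alpha\to ?\beta)$; $!0\to\bot$; $?(\alpha\land\beta)\leftrightarrow ?\alpha\land ?\beta$; $?(\alpha\lor\beta)\leftrightarrow ?\alpha\lor ?\beta$; $?\bot\to 0$; $?\exists x\,\alpha(x)\leftrightarrow\exists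 x\,?\alpha(x)$; $?\forall x\,\alpha(x)\to\forall x\,?\alpha(x)$ (usual variable side conditions implicit). $\vdash A$ means $A$ is derivable in QHC; $A\Rightarrow B$ means $\vdash A\to B$ and $A\Leftrightarrow B$ means $\vdash A\leftrightarrow B$ (with $A,B$ of the same type); $A\vdash B$ means $B$ is derivable in QHC from the premise $A$. Notation: $\Box p := ?!p$ (a proposition) and $\nabla\alpha := !?\alpha$ (a problem). QC and QH denote classical and intuitionistic predicate calculus. A proposition $p$ is stable if $\neg !\neg p\Rightarrow\, !p$, and semi-stable if $\vdash ?(\neg !\neg p\to !p)$; $p$ is semi-decidable if $\vdash ?(!p\lor !\neg p)$. A problem $\alpha$ is semi-decidable if $\vdash ?(\alpha\lor\neg\alpha)$. *)

From Stdlib Require Import List.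

(** The two sorts: propositions (classical) and problems (intuitionistic). *)
Inductive sort : Type := Prp | Prb.

(** Individual variables are de Bruijn indices (nat); the only terms are
    individual variables. Quantifiers bind index 0. *)
Inductive form : sort -> Type :=
| PVar  : nat -> list nat -> form Prp
| QVar  : nat -> list nat -> form Prb
| Zero  : form Prp
| Bot   : form Prb
| And   : forall {s}, form s -> form s -> form s
| Or    : forall {s}, form s -> form s -> form s
| Imp   : forall {s}, form s -> form s -> form s
| Ex    : forall {s}, form s -> form s
| All   : forall {s}, form s -> form s
| Bang  : form Prp -> form Prb
| Quest : form Prb -> form Prp.

Definition up (r : nat -> nat) (n : nat) : nat :=
  match n with 0 => 0 | S k => S (r k) end.

Fixpoint rename {s} (r : nat -> nat) (A : form s) : form s :=
  match A with
  | PVar i ts => PVar i (map r ts)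
  | QVar i ts => QVar i (map r ts)
  | Zero => Zero
  | Bot => Bot
  | And B C => And (rename r B) (rename r C)
  | Or B C => Or (rename r B) (rename r C)
  | Imp B C => Imp (rename r B) (rename r C)
  | Ex B => Ex (rename (up r) B)
  | All B => All (rename (up r) B)
  | Bang B => Bang (rename r B)
  | Quest B => Quest (rename r B)
  end.

(** Shift (weakening: the formula does not contain the newly bound variable). *)
Definition shift {s} (A : form s) : form s := rename S A.

Definition inst (t : nat) (n : nat) : nat :=
  match n with 0 => t | S k => k end.
Definition subst0 {s} (t : nat) (A : form s) : form s := rename (inst t) A.

Definition falsum (s : sort) : form s :=
  match s with Prp => Zero | Prb => Bot end.
Definition Neg {s} (A : form s) : form s := Imp A (falsum s).
Definition Iff {s} (A B : form s) : form s := And (Imp A B) (Imp B A).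

Inductive Prv : forall s, form s -> Prop :=
| ax_K  : forall s (A B : form s), Prv s (Imp A (Imp B A))
| ax_S  : forall s (A B C : form s),
    Prv s (Imp (Imp A (Imp B C)) (Imp (Imp A B) (Imp A C)))
| ax_andE1 : forall s (A B : form s), Prv s (Imp (And A B) A)
| ax_andE2 : forall s (A B : form s), Prv s (Imp (And A B) B)
| ax_andI  : forall s (A B : form s), Prv s (Imp A (Imp B (And A B)))
| ax_orI1  : forall s (A B : form s), Prv s (Imp A (Or A B))
| ax_orI2  : forall s (A B : form s), Prv s (Imp B (Or A B))
| ax_orE   : forall s (A B C : form s),
    Prv s (Imp (Imp A C) (Imp (Imp B C) (Imp (Or A B) C)))
| ax_efq   : forall s (A : form s), Prv s (Imp (falsum s) A)
| ax_dne   : forall (A : form Prp), Prv Prp (Imp (Neg (Neg A)) A)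
| ax_allE  : forall s (A : form s) (t : nat), Prv s (Imp (All A) (subst0 t A))
| ax_exI   : forall s (A : form s) (t : nat), Prv s (Imp (subst0 t A) (Ex A))
| r_mp     : forall s (A B : form s), Prv s (Imp A B) -> Prv s A -> Prv s B
| r_allI   : forall s (A B : form s), Prv s (Imp (shift B) A) -> Prv s (Imp B (All A))
| r_exE    : forall s (A B : form s), Prv s (Imp A (shift B)) -> Prv s (Imp (Ex A) B)
| r_bang   : forall (p : form Prp), Prv Prp p -> Prv Prb (Bang p)
| r_quest  : forall (a : form Prb), Prv Prb a -> Prv Prp (Quest a)
| ax_qb    : forall (p : form Prp), Prv Prp (Imp (Quest (Bang p)) p)
| ax_bq    : forall (a : form Prb), Prv Prb (Imp a (Bang (Quest a)))
| ax_bimp  : forall (p q : form Prp),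
    Prv Prb (Imp (Bang (Imp p q)) (Imp (Bang p) (Bang q)))
| ax_qimp  : forall (a b : form Prb),
    Prv Prp (Imp (Quest (Imp a b)) (Imp (Quest a) (Quest b)))
| ax_bzero : Prv Prb (Imp (Bang Zero) Bot)
| ax_qand  : forall (a b : form Prb),
    Prv Prp (Iff (Quest (And a b)) (And (Quest a) (Quest b)))
| ax_qor   : forall (a b : form Prb),
    Prv Prp (Iff (Quest (Or a b)) (Or (Quest a) (Quest b)))
| ax_qbot  : Prv Prp (Imp (Quest Bot) Zero)
| ax_qex   : forall (a : form Prb), Prv Prp (Iff (Quest (Ex a)) (Ex (Quest a)))
| ax_qall  : forall (a : form Prb), Prv Prp (Imp (Quest (All a)) (All (Quest a))).

Definition stable (p : form Prp) : Prop :=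
  Prv Prb (Imp (Neg (Bang (Neg p))) (Bang p)).
Definition semi_stable (p : form Prp) : Prop :=
  Prv Prp (Quest (Imp (Neg (Bang (Neg p))) (Bang p))).
Definition semi_decidable_prop (p : form Prp) : Prop :=
  Prv Prp (Quest (Or (Bang p) (Bang (Neg p)))).
Definition semi_decidable_prob (a : form Prb) : Prop :=
  Prv Prp (Quest (Or a (Neg a))).


(* Both parts rest on the way the two conversion operators interact:
   ? is monotone and commutes with disjunction, ! is monotone, and the
   schemas ?!p -> p and alpha -> !?alpha form a Galois-type adjunction.

   (a) From |- ?(alpha -> !p) we get |- ?alpha -> ?!p -> p, hence by the
       adjunction |- alpha -> !?alpha -> !p.  So ? is conservative on problem
       implications whose conclusion is a !-problem; stability is exactly
       such an implication, and the converse direction is the rule ?-intro.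
   (b) We show ?alpha <=> ?!?alpha and ~alpha <=> !~?alpha; since ? commutes
       with disjunction, ?(alpha \/ ~alpha) <=> ?(!?alpha \/ !~?alpha). *)

Lemma imp_id s (A : form s) : Prv s (Imp A A).
Proof.
  eapply r_mp; [eapply r_mp|].
  - apply (ax_S s A (Imp A A) A).
  - apply ax_K.
  - apply (ax_K s A A).
Qed.

Lemma imp_post s (A B C : form s) :
  Prv s (Imp B C) -> Prv s (Imp (Imp A B) (Imp A C)).
Proof.
  intro HBC. eapply r_mp; [apply ax_S|].
  eapply r_mp; [apply ax_K | exact HBC].
Qed.

Lemma imp_trans s (A B C : form s) :
  Prv s (Imp A B) -> Prv s (Imp B C) -> Prv s (Imp A C).
Proof. intros HAB HBC. eapply r_mp; [apply imp_post, HBC | exact HAB]. Qed.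

Lemma imp_swap s (A B C : form s) :
  Prv s (Imp A (Imp B C)) -> Prv s (Imp B (Imp A C)).
Proof.
  intro H. eapply imp_trans; [apply (ax_K s B A)|].
  eapply r_mp; [apply ax_S | exact H].
Qed.

Lemma imp_pre s (A A' B : form s) :
  Prv s (Imp A' A) -> Prv s (Imp (Imp A B) (Imp A' B)).
Proof.
  intro H. apply imp_swap. eapply imp_trans; [exact H|].
  apply imp_swap, imp_id.
Qed.

Lemma or_elim s (A B C : form s) :
  Prv s (Imp A C) -> Prv s (Imp B C) -> Prv s (Imp (Or A B) C).
Proof.
  intros HA HB. eapply r_mp; [eapply r_mp; [apply ax_orE | exact HA] | exact HB].
Qed.

Lemma iff_imp s (A B : form s) : Prv s (Iff A B) -> Prv s (Imp A B).
Proof. intro H. eapply r_mp; [apply ax_andE1 | exact H]. Qed.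

Lemma quest_mono (a b : form Prb) :
  Prv Prb (Imp a b) -> Prv Prp (Imp (Quest a) (Quest b)).
Proof. intro H. eapply r_mp; [apply ax_qimp | apply r_quest, H]. Qed.

Lemma bang_mono (p q : form Prp) :
  Prv Prp (Imp p q) -> Prv Prb (Imp (Bang p) (Bang q)).
Proof. intro H. eapply r_mp; [apply ax_bimp | apply r_bang, H]. Qed.

Lemma quest_neg (a : form Prb) : Prv Prp (Imp (Quest (Neg a)) (Neg (Quest a))).
Proof. eapply imp_trans; [apply (ax_qimp a Bot) | apply imp_post, ax_qbot]. Qed.

Lemma quest_or_mono (a b a' b' : form Prb) :
  Prv Prp (Imp (Quest a) (Quest a')) -> Prv Prp (Imp (Quest b) (Quest b')) ->
  Prv Prp (Imp (Quest (Or a b)) (Quest (Or a' b'))).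
Proof.
  intros Ha Hb. eapply imp_trans; [apply iff_imp, ax_qor|].
  apply or_elim.
  - eapply imp_trans; [exact Ha | apply quest_mono, ax_orI1].
  - eapply imp_trans; [exact Hb | apply quest_mono, ax_orI2].
Qed.

Lemma quest_conservative_bang (a : form Prb) (p : form Prp) :
  Prv Prp (Quest (Imp a (Bang p))) -> Prv Prb (Imp a (Bang p)).
Proof.
  intro H.
  assert (Hqa : Prv Prp (Imp (Quest a) p)).
  { eapply imp_trans; [eapply r_mp; [apply ax_qimp | exact H] | apply ax_qb]. }
  eapply imp_trans; [apply ax_bq | apply bang_mono, Hqa].
Qed.

Lemma quest_bang_quest (a : form Prb) :
  Prv Prp (Imp (Quest a) (Quest (Bang (Quest a)))) /\
  Prv Prp (Imp (Quest (Bang (Quest a))) (Quest a)).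
Proof. split; [apply quest_mono, ax_bq | apply ax_qb]. Qed.

Lemma neg_bang_neg_quest (a : form Prb) :
  Prv Prb (Imp (Neg a) (Bang (Neg (Quest a)))) /\
  Prv Prb (Imp (Bang (Neg (Quest a))) (Neg a)).
Proof.
  split.
  - eapply imp_trans; [apply ax_bq | apply bang_mono, quest_neg].
  - eapply imp_trans; [apply (ax_bimp (Quest a) Zero)|].
    eapply imp_trans; [apply imp_pre, ax_bq | apply imp_post, ax_bzero].
Qed.

Theorem proposition2p24 :
  (forall p : form Prp, semi_stable p <-> stable p) /\
  (forall a : form Prb, semi_decidable_prob a <-> semi_decidable_prop (Quest a)).
Proof.
  split.
  - intro p. unfold semi_stable, stable. split.
    + apply quest_conservative_bang.
    + apply r_quest.
  - intro a. unfold semi_decidable_prob, semi_decidable_prop.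
    destruct (quest_bang_quest a) as [Hq_to Hq_from].
    destruct (neg_bang_neg_quest a) as [Hn_to Hn_from].
    split; intro H; eapply r_mp; [| exact H | | exact H].
    + apply quest_or_mono; [exact Hq_to | apply quest_mono, Hn_to].
    + apply quest_or_mono; [exact Hq_from | apply quest_mono, Hn_from].
Qed.
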